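(* Let $X$ be a $T_0$ space. The following conditions are equivalent: (1) The $GSI_2$-convergence structure in $X$ is topological, i.e. for every net $(x_i)_{i\in I}$ in $X$ and every $x\in X$, $(x_i)_{i\in I}$ $GSI_2$-converges to $x$ if and only if $(x_i)_{i\in I}$ converges to $x$ with respect to the topology $\mathcal{O}(\mathcal{GSI}_2(X))$. (2) For any net $(x_i)_{i \in I}$ in $X$ and $x \in X$, $(x_i)_{i\in I}$ $GSI_2$-converges to $x$ if and only if $(x_i)_{i \in I}$ converges to $x$ with respect to the $SI_2$-topology $\mathcal{O}_{SI_2}(X)$. (3) $X$ is strongly $QI_2$-continuous.
   Context: For a $T_0$ space $X$, the specialization order is $x\le y$ iff $x\in \mathrm{cl}\{y\}$; all order notions refer to it. For $A\subseteq X$, $\uparrow A=\{x: a\le x \text{ for some } a\in A\}$, $\uparrow x=\uparrow\{x\}$; $A^{\uparrow}$ is the set of upper bounds of $A$, $A^{\downarrow}$ the set of lower bounds of $A$, and the cut of $A$ is $A^\delta=(A^\uparrow)^\downarrow$. A nonempty $A\subseteq X$ is irreducible if whenever $A\subseteq F_1\cup F_2$ with $F_1,F_2$ closed, then $A\subseteq F_1$ or $A\subseteq F_2$; $\mathrm{Irr}(X)$ denotes the set of irreducible subsets. $X^{(<\omega)}$ is the set of nonempty finite subsets of $X$. $Q(X)$ is the set of nonempty compact saturated (i.e. upper) subsets of $X$; $P_S(X)$ (the Smyth power space) is $Q(X)$ with the upper Vietoris topology, having basis $\{\square U: U \text{ open in } X\}$ where $\square U=\{Q\in Q(X): Q\subseteq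 U\}$. A net $(x_i)_{i\in I}$ is eventually in $U$ if there is $i_0$ with $x_i\in U$ for all $i\ge i_0$; it converges to $x$ in a topology if it is eventually in every open set containing $x$. A subset $U\subseteq X$ is $SI_2$-open if $U$ is open in $X$ and for every $F\in \mathrm{Irr}(X)$, $F^\delta\cap U\neq\emptyset$ implies $F\cap U\ne\emptyset$; the $SI_2$-open sets form a topology $\mathcal{O}_{SI_2}(X)$. A net $(x_i)_{i\in I}$ in $X$ $GSI_2$-converges to $x\in X$ if there exists $\mathcal{F}\subseteq X^{(<\omega)}$ such that $\{\uparrow F: F\in\mathcal F\}$ is an irreducible subset of $P_S(X)$ and (i) for every open $U$ of $X$, if $\uparrow F\subseteq U$ for some $F\in\mathcal F$, then $x_i\in U$ eventually; and (ii) $\bigcap_{F\in\mathcal F}\uparrow F\subseteq \uparrow x$. Let $\mathcal{GSI}_2(X)$ be the class of all pairs (net, point) with the net $GSI_2$-converging to the point, and $\mathcal{O}(\mathcal{GSI}_2(X))=\{U\subseteq X: \text{whenever } (x_i)_{i\in I} \text{ } GSI_2\text{-converges to } x\in U, \ x_i\in U \text{ eventually}\}$. For $A,B\subseteq X$, $A\ll_{I_2} B$ means: for every irreducible $D\subseteq X$, $D^\delta\cap B\ne\emptyset$ implies $A\cap \mathrm{cl}D\neq\emptyset$; write $A\ll_{I_2}x$ for $A\ll_{I_2}\{x\}$. For $x\in X$ let $w(x)=\{\uparrow F: F\in X^{(<\omega)}, F\ll_{I_2}x\}$. $X$ is $QI_2$-continuous if for every $x\in X$, $w(x)$ is an irreducible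 subset of $P_S(X)$ and $\uparrow x=\bigcap w(x)$. $X$ is strongly $QI_2$-continuous if it is $QI_2$-continuous and for every $F\in X^{(<\omega)}$, $x\in X$ with $F\ll_{I_2}x$ and every open $U$ with $F\subseteq U$, there is an $SI_2$-open set $W$ with $x\in W\subseteq U$. *)

From HB Require Import structures.
From mathcomp Require Import all_boot all_order.
From mathcomp Require Import all_classical.
From mathcomp Require Import topology.
Set Implicit Arguments. Unset Strict Implicit. Unset Printing Implicit Defensive.
Local Open Scope classical_set_scope.

Record directed_set := DirectedSet {
  dcarrier :> Type;
  dle : dcarrier -> dcarrier -> Prop;
  dle_refl : forall i, dle i i;
  dle_trans : forall i j k, dle i j -> dle j k -> dle i k;
  dnonempty : inhabited dcarrier;
  ddirected : forall i j, exists k, dle i k /\ dle j k }.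

Definition eventually_in {T : Type} (I : directed_set) (x : I -> T) (U : set T) :=
  exists i0 : I, forall i : I, dle i0 i -> U (x i).

Definition net_conv_in {T : Type} (op : set T -> Prop) (I : directed_set)
  (x : I -> T) (x0 : T) :=
  forall U, op U -> U x0 -> eventually_in x U.

Definition irreducible_in {T : Type} (op : set T -> Prop) (A : set T) :=
  A !=set0 /\
  forall O1 O2, op O1 -> op O2 -> A `<=` (~` O1) `|` (~` O2) ->
    A `<=` ~` O1 \/ A `<=` ~` O2.

Section Spaces.
Context {X : topologicalType}.

Definition spec_le (x y : X) := closure [set y] x.
Definition upset (A : set X) := [set x | exists2 a, A a & spec_le a x].
Definition upper_bounds (A : set X) := [set u | forall a, A a -> spec_le a u].
Definition lower_bounds (A : set X) := [set l | forall a, A a -> spec_le l a].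
Definition cut (A : set X) := lower_bounds (upper_bounds A).

Definition Irr (A : set X) := irreducible_in (@open X) A.

Definition finite_nonempty (F : set X) := finite_set F /\ F !=set0.

Definition QX (A : set X) := [/\ A !=set0, compact A & upset A `<=` A].

(* Upper Vietoris topology on Q(X) (Smyth power space), open sets seen as
   subsets of set X contained in Q(X): unions of basic sets box U. *)
Definition box (U : set X) := [set Q | QX Q /\ Q `<=` U].
Definition PS_open (O : set (set X)) :=
  O `<=` QX /\ forall Q, O Q -> exists U, [/\ open U, Q `<=` U & box U `<=` O].

Definition PS_irreducible (A : set (set X)) :=
  A `<=` QX /\ irreducible_in PS_open A.

Definition SI2_open (U : set X) :=
  open U /\ forall F, Irr F -> cut F `&` U !=set0 -> F `&` U !=set0.

Definition GSI2_conv (I : directed_set) (x : I -> X) (x0 : X) :=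
  exists FF : set (set X),
    [/\ FF `<=` finite_nonempty,
        PS_irreducible [set upset F | F in FF],
        (forall U, open U -> (exists2 F, FF F & upset F `<=` U) ->
            eventually_in x U) &
        \bigcap_(F in FF) upset F `<=` upset [set x0]].

Definition GSI2_open (U : set X) :=
  forall (I : directed_set) (x : I -> X) (x0 : X),
    GSI2_conv x x0 -> U x0 -> eventually_in x U.

Definition ll_I2 (A B : set X) :=
  forall D, Irr D -> cut D `&` B !=set0 -> A `&` closure D !=set0.

Definition w_set (x : X) :=
  [set upset F | F in [set F | finite_nonempty F /\ ll_I2 F [set x]]].

Definition QI2_continuous :=
  forall x : X, PS_irreducible (w_set x) /\
                upset [set x] = \bigcap_(Q in w_set x) Q.

Definition strongly_QI2_continuous :=
  QI2_continuous /\
  forall (F : set X) (x : X) (U : set X), finite_nonempty F -> ll_I2 F [set x] ->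
    open U -> F `<=` U -> exists W, [/\ SI2_open W, W x & W `<=` U].

End Spaces.

(* The SI_2-topology coincides with the topology of GSI_2-convergence, so
   conditions (1) and (2) are the same.  The engine is a Rudin-type lemma: if a
   family FF of finite sets has {upset F | F in FF} irreducible in the Smyth
   power space and intersection inside upset x0, then every closed C meeting all
   members of FF contains a closed irreducible A whose cut contains x0: by Zorn
   there is a maximal open B such that every F in FF still meets C \ B, and
   A := C \ B.
   With C the complement of an SI_2-open neighbourhood W of x0 this forces some
   F in FF into W, hence GSI_2-convergence implies SI_2-convergence.
   Conversely, if SI_2-convergence implies GSI_2-convergence, the
   SI_2-neighbourhood filter of x, traced on the complement of an open U, yields
   such a family; Rudin's lemma then shows that F << x and F <= U give an
   SI_2-open W with x in W <= U, and QI_2-continuity follows.  For (3) => (2),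
   {F | F << x} itself witnesses GSI_2-convergence. *)

From HB Require Import structures.
From mathcomp Require Import all_boot all_order.
From mathcomp Require Import all_classical.
From mathcomp Require Import topology.

Local Open Scope classical_set_scope.

Section FilterNet.
Context {T : Type} (F : set_system T) {PF : ProperFilter F}.

Definition filter_index := {p : set T * T | F p.1 /\ p.1 p.2}.

Definition filter_index_le (p q : filter_index) := (sval q).1 `<=` (sval p).1.

Lemma filter_index_le_refl p : filter_index_le p p.
Proof. by []. Qed.

Lemma filter_index_le_trans p q r :
  filter_index_le p q -> filter_index_le q r -> filter_index_le p r.
Proof. by move=> pq qr x /qr /pq. Qed.

Lemma filter_index_inhabited : inhabited filter_index.
Proof.
have [t _] := @filter_ex _ F _ setT filterT.
by constructor; exists (setT, t); split => //; exact: filterT.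
Qed.

Lemma filter_index_directed p q :
  exists r, filter_index_le p r /\ filter_index_le q r.
Proof.
case: p q => [[A a] [FA Aa]] [[B b] [FB Bb]].
have FAB : F (A `&` B) by apply: filterI.
have [c ABc] := filter_ex FAB.
by exists (exist _ (A `&` B, c) (conj FAB ABc)); split => x [].
Qed.

Definition filter_directed_set : directed_set :=
  DirectedSet filter_index_le_refl filter_index_le_trans
    filter_index_inhabited filter_index_directed.

Definition filter_net (p : filter_directed_set) : T := (sval p).2.

Lemma eventually_filter_netE U : eventually_in filter_net U <-> F U.
Proof.
split => [[[[A a] [FA Aa]] evU]|FU].
  apply: filterS (FA) => b Ab.
  exact: evU (exist _ (A, b) (conj FA Ab)) _.
have [u Uu] := filter_ex FU.
by exists (exist _ (U, u) (conj FU Uu)) => -[[B b] [FB Bb]] /= /(_ b Bb).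
Qed.

End FilterNet.

Lemma filter_from_trace_proper {T : Type} (B : set (set T)) (C : set T) :
  B setT -> setI_closed B -> (forall V, B V -> C `&` V !=set0) ->
  ProperFilter (filter_from B (fun V => C `&` V)).
Proof.
move=> BT BI BC; apply: filter_from_proper => //.
apply: filter_from_filter => [|V1 V2 BV1 BV2]; first by exists setT.
by exists (V1 `&` V2); [exact: BI|move=> y [Cy [V1y V2y]]].
Qed.

Lemma eventually_inS {T : Type} (I : directed_set) (x : I -> T) (U V : set T) :
  U `<=` V -> eventually_in x U -> eventually_in x V.
Proof. by move=> UV [i0 evU]; exists i0 => i /evU /UV. Qed.

Lemma chain_bigcup_finite_sub {T : Type} (Ch : set (set T)) (S : set T) :
  Ch !=set0 -> total_on Ch subset -> finite_set S ->
  S `<=` \bigcup_(B in Ch) B -> exists2 B, Ch B & S `<=` B.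
Proof.
move=> [B0 ChB0] tot /finite_setP[n]; elim: n S => [S|n IHn S].
  by rewrite II0 card_eq0 => /eqP -> _; exists B0.
move=> /eq_cardSP[a Sa /IHn IH] SCh.
have [|B ChB SB] := IH; first by move=> y [/SCh].
have [Ba ChBa Ba_a] := SCh a Sa.
have SBa y : S y -> y = a \/ (S `\ a) y.
  by have [->|ya] := pselect (y = a) => Sy; [left|right].
have [BaB|BBa] := tot _ _ ChBa ChB.
  by exists B => // y /SBa[->|/SB]; [exact: BaB|].
by exists Ba => // y /SBa[->|/SB/BBa].
Qed.

Section SpecializationOrder.
Context {X : topologicalType}.
Implicit Types (x y z : X) (A D F U V : set X).

Lemma spec_le_refl x : spec_le x x.
Proof. exact: subset_closure. Qed.

Lemma spec_le_trans x y z : spec_le x y -> spec_le y z -> spec_le x z.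
Proof.
rewrite /spec_le {1}closureE => + yz.
by apply: smallest_sub; [exact: closed_closure|move=> _ ->].
Qed.

Lemma open_spec_le U x y : open U -> U x -> spec_le x y -> U y.
Proof. by move=> oU Ux /(_ U (open_nbhs_nbhs (conj oU Ux))) [_ [/= -> ]]. Qed.

Lemma upset_sub F : F `<=` upset F.
Proof. by move=> x Fx; exists x => //; exact: spec_le_refl. Qed.

Lemma upset1 x y : upset [set x] y <-> spec_le x y.
Proof. by split => [[_ /= -> //]|xy]; exists x. Qed.

Lemma upset_open_sub U F : open U -> (upset F `<=` U <-> F `<=` U).
Proof.
move=> oU; split => [uFU x Fx|FU y [a /FU Ua ay]]; first exact/uFU/upset_sub.
exact: open_spec_le Ua ay.
Qed.

Lemma compact_upset1 x : compact (upset [set x]).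
Proof.
move=> G PG Gx; exists x; split; first exact/upset1/spec_le_refl.
move=> A B GA; rewrite nbhsE => -[V [oV Vx] VB].
have [y [Ay /upset1 xy]] : (A `&` upset [set x]) !=set0.
  have GAx : G (A `&` upset [set x]) by apply: filterI.
  exact: filter_ex GAx.
by exists y; split => //; apply/VB; exact: open_spec_le Vx xy.
Qed.

Lemma compact_upset F : finite_set F -> compact (upset F).
Proof.
case/finite_setP=> n; elim: n F => [F|n IHn F /eq_cardSP[a Fa /IHn cFa]].
  rewrite II0 card_eq0 => /eqP ->.
  have -> : upset set0 = set0 :> set X by apply/seteqP; split => // ? [].
  exact: compact0.
have -> : upset F = upset [set a] `|` upset (F `\ a).
  apply/seteqP; split => [y [b Fb bly]|y [/upset1 ay|[b [Fb _] bly]]].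
  - have [->|ab] := pselect (a = b); first by left; exact/upset1.
    by right; exists b => //; split => // ba; apply: ab.
  - by exists a.
  - by exists b.
by apply: compactU; [exact: compact_upset1|exact: cFa].
Qed.

Lemma QX_upset F : finite_nonempty F -> QX (upset F).
Proof.
move=> [finF [x Fx]]; split; first by exists x; exact: upset_sub.
  exact: compact_upset.
by move=> y [z [a Fa az] zy]; exists a => //; exact: spec_le_trans zy.
Qed.

Lemma IrrP D :
  Irr D <-> D !=set0 /\ forall U V, open U -> open V ->
    D `&` U !=set0 -> D `&` V !=set0 -> D `&` (U `&` V) !=set0.
Proof.
split=> -[D0 irrD]; split => // U V oU oV.
  move=> [a [Da Ua]] [b [Db Vb]]; apply: contrapT => DUV.
  have : D `<=` ~` U `|` ~` V.
    by move=> d Dd; apply/not_andP => -[Ud Vd]; apply: DUV; exists d.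
  by move=> /(irrD U V oU oV)[DU|DV]; [exact: DU Da Ua|exact: DV Db Vb].
move=> DUV; apply: contrapT => /not_orP[/existsNP[a /not_implyP[Da /contrapT Ua]]].
move=> /existsNP[b /not_implyP[Db /contrapT Vb]].
have [d [Dd [Ud Vd]]] :=
  irrD U V oU oV (ex_intro _ a (conj Da Ua)) (ex_intro _ b (conj Db Vb)).
by have [] := DUV d Dd.
Qed.

Lemma Irr1 x : Irr [set x].
Proof.
by apply/IrrP; split => [|U V _ _ [_ [-> Ux]] [_ [-> Vx]]]; exists x.
Qed.

Lemma cut1 x : cut [set x] x.
Proof. by move=> u /(_ x erefl). Qed.

Lemma ll_I2_upset1 F x : ll_I2 F [set x] -> upset [set x] `<=` upset F.
Proof.
move=> Fx y /upset1 xy.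
have [f [Ff fx]] := Fx _ (Irr1 x) (ex_intro _ x (conj (cut1 x) erefl)).
by exists f => //; exact: spec_le_trans fx xy.
Qed.

End SpecializationOrder.

Section SmythPowerSpace.
Context {X : topologicalType}.
Implicit Types (FF : set (set X)) (U V : set X).

Lemma box_open U : open U -> PS_open (box U).
Proof. by move=> oU; split => [Q []//|Q [_ QU]]; exists U; split. Qed.

Definition open_filtered FF :=
  FF !=set0 /\ forall U V, open U -> open V ->
    (exists2 F, FF F & F `<=` U) -> (exists2 F, FF F & F `<=` V) ->
    exists2 F, FF F & F `<=` U `&` V.

Lemma PS_irreducible_upset_open_filtered FF : FF `<=` finite_nonempty ->
  PS_irreducible [set upset F | F in FF] -> open_filtered FF.
Proof.
move=> FFfin [_ [[_ [F0 FF0 _]] irr]].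
split=> [|U V oU oV [F1 FF1 F1U] [F2 FF2 F2V]]; first by exists F0.
have upset_box F U' : FF F -> open U' -> F `<=` U' -> box U' (upset F).
  by move=> FF_F oU' FU'; split; [exact/QX_upset/FFfin|exact/upset_open_sub].
apply: contrapT => noF.
have : [set upset F | F in FF] `<=` ~` box U `|` ~` box V.
  move=> _ [F FF_F <-]; apply/not_andP => -[[_ /(upset_open_sub _ _ oU) FU]].
  move=> [_ /(upset_open_sub _ _ oV) FV]; apply: noF.
  by exists F => // x Fx; split; [exact: FU|exact: FV].
move=> /(irr _ _ (box_open _ oU) (box_open _ oV))[nU|nV].
- by apply: (nU (upset F1)); [exists F1|exact: upset_box].
- by apply: (nV (upset F2)); [exists F2|exact: upset_box].
Qed.

Lemma open_filtered_PS_irreducible_upset FF : FF `<=` finite_nonempty ->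
  open_filtered FF -> PS_irreducible [set upset F | F in FF].
Proof.
move=> FFfin [[F0 FF0] filt].
split; first by move=> Q [F /FFfin/QX_upset QF <-].
split=> [|O1 O2 [_ oO1] [_ oO2] FFO]; first by exists (upset F0), F0.
have [[_ [F1 FF1 <-] O1F1]|nO1] :=
  pselect (exists2 Q, [set upset F | F in FF] Q & O1 Q); last first.
  by left => Q FFQ O1Q; apply: nO1; exists Q.
have [[_ [F2 FF2 <-] O2F2]|nO2] :=
  pselect (exists2 Q, [set upset F | F in FF] Q & O2 Q); last first.
  by right => Q FFQ O2Q; apply: nO2; exists Q.
have [U1 [oU1 /(upset_open_sub _ _ oU1) F1U1 bU1]] := oO1 _ O1F1.
have [U2 [oU2 /(upset_open_sub _ _ oU2) F2U2 bU2]] := oO2 _ O2F2.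
have [F FF_F FU] := filt U1 U2 oU1 oU2 (ex_intro2 _ _ F1 FF1 F1U1)
  (ex_intro2 _ _ F2 FF2 F2U2).
exfalso; have QF := QX_upset _ (FFfin _ FF_F).
have [nF|nF] : ~ O1 (upset F) \/ ~ O2 (upset F) by apply: FFO; exists F.
- by apply: nF; apply: bU1; split => //; apply/upset_open_sub => // x /FU[].
- by apply: nF; apply: bU2; split => //; apply/upset_open_sub => // x /FU[].
Qed.

Lemma PS_irreducible_upsetE FF : FF `<=` finite_nonempty ->
  PS_irreducible [set upset F | F in FF] <-> open_filtered FF.
Proof.
by move=> FFfin; split;
  [exact: PS_irreducible_upset_open_filtered|exact: open_filtered_PS_irreducible_upset].
Qed.

End SmythPowerSpace.

Definition GSI2_family {X : topologicalType} (FF : set (set X)) (x0 : X) :=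
  [/\ FF `<=` finite_nonempty, open_filtered FF &
      \bigcap_(F in FF) upset F `<=` upset [set x0]].

Lemma GSI2_convP {X : topologicalType} (I : directed_set) (x : I -> X) (x0 : X) :
  GSI2_conv x x0 <-> exists2 FF, GSI2_family FF x0 &
    forall U, open U -> (exists2 F, FF F & F `<=` U) -> eventually_in x U.
Proof.
split=> [[FF [FFfin /(PS_irreducible_upsetE _ FFfin) filt ev FFx0]]|].
  exists FF => // U oU [F FF_F FU]; apply: ev => //.
  by exists F => //; apply/(upset_open_sub _ _ oU).
move=> [FF [FFfin filt FFx0] ev].
exists FF; split => //; first exact/PS_irreducible_upsetE.
by move=> U oU [F FF_F /(upset_open_sub _ _ oU) FU]; apply: ev => //; exists F.
Qed.

Section RudinLemma.
Context {X : topologicalType} {FF : set (set X)} {x0 : X} {C : set X}.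
Hypotheses (FFx0 : GSI2_family FF x0) (Cclosed : closed C)
  (FF_meetC : forall F, FF F -> F `&` C !=set0).

Let avoids (B : set X) := open B /\ forall F, FF F -> F `&` (C `\` B) !=set0.

Lemma avoids_bigcup_chain (Ch : set (set X)) :
  Ch `<=` avoids -> total_on Ch subset -> avoids (\bigcup_(B in Ch) B).
Proof.
move=> ChA tot; split=> [|F FF_F]; first by apply: bigcup_open => B /ChA[].
have [finF _] : finite_nonempty F by case: FFx0 => FFfin _ _; exact: FFfin.
apply: contrapT => noF.
have FCCh : F `&` C `<=` \bigcup_(B in Ch) B.
  by move=> y [Fy Cy]; apply: contrapT => nChy; apply: noF; exists y.
have [c FCc] := FF_meetC F FF_F.
have [B0 ChB0 _] := FCCh c FCc.
have [B ChB FCB] := chain_bigcup_finite_sub _ _ (ex_intro _ B0 ChB0) tot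
  (@finite_setIl _ F C finF) FCCh.
by have [y [Fy [Cy nBy]]] := (ChA B ChB).2 F FF_F; apply/nBy/FCB.
Qed.

Lemma maximal_avoider : exists2 B, avoids B &
  forall O, open O -> O `&` (C `\` B) !=set0 ->
    exists2 F, FF F & F `&` (C `\` B) `<=` O.
Proof.
have [B [avB maxB]] := Zorn_bigcup avoids_bigcup_chain.
exists B => // O oO [y [Oy [Cy nBy]]].
have /not_andP[|/existsNP[F /not_implyP[FF_F noF]]] : ~ avoids (B `|` O).
- by apply: maxB; split => [z Bz|/(_ y (or_intror Oy))//]; left.
- by case; apply: openU => //; exact: avB.1.
exists F => // z [Fz [Cz nBz]]; apply: contrapT => nOz.
by apply: noF; exists z; do 2!split => //; case.
Qed.

Lemma Rudin_irreducible : exists A, [/\ closed A, A `<=` C, Irr A & cut A x0].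
Proof.
have [FFfin [[F0 FF0] filt] FFx0'] := FFx0.
have [B [oB meetA] maxB] := maximal_avoider; set A := C `\` B.
have closedA : closed A by apply: closedI => //; rewrite closedC.
exists A; split => //; first by move=> ? [].
  apply/IrrP; split; first by have [a [_ Aa]] := meetA F0 FF0; exists a.
  move=> O1 O2 oO1 oO2 [a [Aa O1a]] [b [Ab O2b]].
  have [F1 FF1 F1O1] := maxB O1 oO1 (ex_intro _ a (conj O1a Aa)).
  have [F2 FF2 F2O2] := maxB O2 oO2 (ex_intro _ b (conj O2b Ab)).
  have openV (O : set X) : open O -> open (O `|` ~` A).
    by move=> oO; apply: openU => //; rewrite openC.
  have FV F O : F `&` A `<=` O -> F `<=` O `|` ~` A.
    by move=> FAO z Fz; have [Az|nAz] := pselect (A z); [left; exact: FAO|right].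
  have [F FF_F FV12] := filt _ _ (openV _ oO1) (openV _ oO2)
    (ex_intro2 _ _ F1 FF1 (FV _ _ F1O1)) (ex_intro2 _ _ F2 FF2 (FV _ _ F2O2)).
  have [z [Fz Az]] := meetA F FF_F.
  by have [[O1z|//] [O2z|//]] := FV12 z Fz; exists z.
move=> u ubA; apply/upset1/FFx0' => F FF_F.
by have [a [Fa Aa]] := meetA F FF_F; exists a => //; exact: ubA.
Qed.

End RudinLemma.

Section SI2Topology.
Context {X : topologicalType}.
Implicit Types (D U W : set X) (FF : set (set X)).

Lemma SI2_openT : SI2_open [set: X].
Proof. by split => [|F [[f Ff] _] _]; [exact: openT|exists f]. Qed.

Lemma SI2_openI W1 W2 : SI2_open W1 -> SI2_open W2 -> SI2_open (W1 `&` W2).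
Proof.
move=> [oW1 SW1] [oW2 SW2]; split=> [|D IrrD [y [Dy [W1y W2y]]]]; first exact: openI.
have [_ meetD] := (IrrP D).1 IrrD.
by apply: meetD => //; [apply: SW1|apply: SW2] => //; exists y.
Qed.

Lemma GSI2_family_SI2_nbhs FF x0 W :
  GSI2_family FF x0 -> SI2_open W -> W x0 -> exists2 F, FF F & F `<=` W.
Proof.
move=> FFx0 [oW SW] Wx0; apply: contrapT => noF.
have [|A [_ AW IrrA cutA]] := Rudin_irreducible FFx0 (open_closedC oW).
  move=> F FF_F; apply: contrapT => nFW; apply: noF; exists F => // y Fy.
  by apply: contrapT => nWy; apply: nFW; exists y.
by have [a [Aa Wa]] := SW A IrrA (ex_intro _ x0 (conj cutA Wx0)); exact: AW Aa Wa.
Qed.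

Lemma GSI2_conv_SI2 (I : directed_set) (x : I -> X) (x0 : X) :
  GSI2_conv x x0 -> net_conv_in (@SI2_open X) x x0.
Proof.
move=> /GSI2_convP[FF FFx0 ev] W SW Wx0; apply: ev; first exact: SW.1.
exact: GSI2_family_SI2_nbhs FFx0 SW Wx0.
Qed.

Lemma GSI2_conv_of_Irr D z (I : directed_set) (x : I -> X) :
  Irr D -> cut D z ->
  (forall V, open V -> D `&` V !=set0 -> eventually_in x V) -> GSI2_conv x z.
Proof.
move=> IrrD cutDz ev; apply/GSI2_convP; exists [set [set d] | d in D].
  split.
  - by move=> _ [d _ <-]; split; [exact: finite_set1|exists d].
  - have [[d0 Dd0] Dmeet] := (IrrP D).1 IrrD.
    split; first by exists [set d0], d0.
    move=> U V oU oV [_ [a Da <-] aU] [_ [b Db <-] bV].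
    have [d [Dd UVd]] := Dmeet U V oU oV
      (ex_intro _ a (conj Da (aU a erefl))) (ex_intro _ b (conj Db (bV b erefl))).
    by exists [set d] => [|_ ->]; first exists d.
  - move=> y Dy; apply/upset1/cutDz => d Dd.
    by apply/upset1; apply: Dy; exists d.
by move=> V oV [_ [d Dd <-] dV]; apply: ev => //; exists d; split => //; exact: dV.
Qed.

Lemma GSI2_open_open U : GSI2_open U -> open U.
Proof.
move=> GU; rewrite openE => x Ux.
apply/(eventually_filter_netE (nbhs x))/(GU _ _ x _ Ux).
apply: (GSI2_conv_of_Irr _ _ _ _ (Irr1 x) (cut1 x)) => V oV [_ [-> Vx]].
exact/eventually_filter_netE/open_nbhs_nbhs.
Qed.

Lemma GSI2_open_SI2 U : GSI2_open U -> SI2_open U.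
Proof.
move=> GU; split=> [|D IrrD [z [cutDz Uz]]]; first exact: GSI2_open_open.
have [[d0 Dd0] meetD] := (IrrP D).1 IrrD.
pose traceD := filter_from [set V | open V /\ D `&` V !=set0] (fun V => D `&` V).
have traceD_proper : ProperFilter traceD.
  apply: filter_from_trace_proper => [|V1 V2 [oV1 DV1] [oV2 DV2]|V [] //].
    by split; [exact: openT|exists d0].
  by split; [exact: openI|exact: meetD].
have : traceD U.
  apply/(eventually_filter_netE traceD)/(GU _ _ z _ Uz).
  apply: (GSI2_conv_of_Irr _ _ _ _ IrrD cutDz) => V oV DV.
  by apply/eventually_filter_netE; exists V => // y [].
by move=> [V [_ [d [Dd Vd]]] DVU]; exists d; split => //; exact: DVU.
Qed.

Lemma GSI2_openE : @GSI2_open X = @SI2_open X.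
Proof.
apply/funext => U; apply/propext; split; first exact: GSI2_open_SI2.
by move=> SU I x x0 /GSI2_conv_SI2/(_ U SU).
Qed.

End SI2Topology.

Section SI2ConvergenceIsGSI2.
Context {X : topologicalType}.
Hypothesis SI2_GSI2 : forall (I : directed_set) (x : I -> X) (x0 : X),
  net_conv_in (@SI2_open X) x x0 -> GSI2_conv x x0.
Implicit Types (x : X) (C F U V W : set X).

Lemma GSI2_family_of_SI2_trace x C :
  (forall W, SI2_open W -> W x -> C `&` W !=set0) ->
  exists2 FF, GSI2_family FF x &
    forall V, open V -> (exists2 F, FF F & F `<=` V) ->
      exists W, [/\ SI2_open W, W x & C `&` W `<=` V].
Proof.
move=> SI2C.
pose trace := filter_from [set W : set X | SI2_open W /\ W x] (fun W => C `&` W).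
have trace_proper : ProperFilter trace.
  apply: filter_from_trace_proper => [|W1 W2 [SW1 W1x] [SW2 W2x]|W [SW Wx]].
  - by split => //; exact: SI2_openT.
  - by split; [exact: SI2_openI|].
  - exact: SI2C.
have /GSI2_convP[FF FFx ev] : GSI2_conv (filter_net trace) x.
  apply: SI2_GSI2 => W SW Wx; apply/eventually_filter_netE.
  by exists W => // y [].
exists FF => // V oV /(ev V oV)/eventually_filter_netE[W [SW Wx] WCV].
by exists W.
Qed.

Lemma SI2_nbhs_GSI2_family x :
  exists2 FF, GSI2_family FF x & forall F, FF F -> ll_I2 F [set x].
Proof.
have [|FF FFx FFW] := GSI2_family_of_SI2_trace x setT; first by move=> W _ Wx; exists x.
exists FF => // F FF_F D IrrD [y [cutDx /= yx]]; subst y; apply: contrapT => nFD.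
have oV : open (~` closure D) by rewrite openC; exact: closed_closure.
have [W [[_ SW] Wx WD]] := FFW _ oV
  (ex_intro2 _ _ F FF_F (fun f Ff cDf => nFD (ex_intro _ f (conj Ff cDf)))).
have [d [Dd Wd]] := SW D IrrD (ex_intro _ x (conj cutDx Wx)).
exact: WD d (conj Logic.I Wd) (subset_closure Dd).
Qed.

Lemma ll_I2_SI2_nbhs_sub F x U :
  ll_I2 F [set x] -> open U -> F `<=` U -> exists W, [/\ SI2_open W, W x & W `<=` U].
Proof.
move=> Fx oU FU; apply: contrapT => noW.
have SI2C W : SI2_open W -> W x -> ~` U `&` W !=set0.
  move=> SW Wx; apply: contrapT => WU; apply: noW; exists W; split => // y Wy.
  by apply: contrapT => nUy; apply: WU; exists y.
have [FF FFx FFW] := GSI2_family_of_SI2_trace x (~` U) SI2C.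
have [|A [cA AU IrrA cutA]] := Rudin_irreducible FFx (open_closedC oU).
  move=> F' FF_F'; apply: contrapT => nF'U.
  have F'U : F' `<=` U.
    by move=> y F'y; apply: contrapT => nUy; apply: nF'U; exists y.
  have [W [SW Wx WU]] := FFW U oU (ex_intro2 _ _ F' FF_F' F'U).
  have [y [nUy Wy]] := SI2C W SW Wx.
  exact: nUy (WU y (conj nUy Wy)).
have [f [Ff]] := Fx A IrrA (ex_intro _ x (conj cutA erefl)).
rewrite -(closure_id A).1 // => Af.
exact: AU Af (FU f Ff).
Qed.

Lemma SI2_QI2_continuous : QI2_continuous (X := X).
Proof.
move=> x; have [FF FFx FFll] := SI2_nbhs_GSI2_family x.
have [FFfin [[F0 FF0] _] FFx0] := FFx.
have wFF F : FF F -> finite_nonempty F /\ ll_I2 F [set x].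
  by move=> FF_F; split; [exact: FFfin|exact: FFll].
split.
  apply/PS_irreducible_upsetE => [F []//|].
  split; first by exists F0; exact: wFF.
  move=> U V oU oV [F1 [_ F1x] F1U] [F2 [_ F2x] F2V].
  have [W1 [SW1 W1x W1U]] := ll_I2_SI2_nbhs_sub F1 x U F1x oU F1U.
  have [W2 [SW2 W2x W2V]] := ll_I2_SI2_nbhs_sub F2 x V F2x oV F2V.
  have [F FF_F FW] :=
    GSI2_family_SI2_nbhs FF x _ FFx (SI2_openI _ _ SW1 SW2) (conj W1x W2x).
  exists F; first exact: wFF.
  by move=> y /FW[/W1U ? /W2V ?].
apply/seteqP; split => [y xy _ [F [_ Fx] <-]|y wy].
  exact: ll_I2_upset1 Fx _ xy.
by apply: FFx0 => F FF_F; apply: wy; exists F => //; exact: wFF.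
Qed.

Lemma ll_I2_SI2_nbhs_subly_QI2_continuous : strongly_QI2_continuous (X := X).
Proof. by split => [|F x U _]; [exact: SI2_QI2_continuous|exact: ll_I2_SI2_nbhs_sub]. Qed.

End SI2ConvergenceIsGSI2.

Lemma strongly_QI2_continuous_GSI2_conv {X : topologicalType} :
  strongly_QI2_continuous (X := X) ->
  forall (I : directed_set) (x : I -> X) (x0 : X),
    net_conv_in (@SI2_open X) x x0 -> GSI2_conv x x0.
Proof.
move=> [QI2 strong] I x x0 conv; have [irr upx0] := QI2 x0.
exists [set F | finite_nonempty F /\ ll_I2 F [set x0]]; split => //.
- by move=> F [].
- move=> U oU [F [finF Fx0] /(upset_open_sub _ _ oU) FU].
  have [W [SW Wx0 WU]] := strong F x0 U finF Fx0 oU FU.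
  exact: eventually_inS WU (conv W SW Wx0).
- by rewrite upx0 => y Fy _ [F FF_F <-]; exact: Fy.
Qed.

Lemma GSI2_conv_SI2P {X : topologicalType} :
  (forall (I : directed_set) (x : I -> X) (x0 : X),
      GSI2_conv x x0 <-> net_conv_in (@SI2_open X) x x0) <->
  strongly_QI2_continuous (X := X).
Proof.
split => [conv|sQI2 I x x0].
  by apply: ll_I2_SI2_nbhs_subly_QI2_continuous => I x x0 /conv.
by split; [exact: GSI2_conv_SI2|exact: strongly_QI2_continuous_GSI2_conv].
Qed.

Theorem theorem4p12 (X : topologicalType) (T0 : @kolmogorov_space X) :
  ((forall (I : directed_set) (x : I -> X) (x0 : X),
      GSI2_conv x x0 <-> net_conv_in (@GSI2_open X) x x0) <->
   strongly_QI2_continuous (X := X)) /\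
  ((forall (I : directed_set) (x : I -> X) (x0 : X),
      GSI2_conv x x0 <-> net_conv_in (@SI2_open X) x x0) <->
   strongly_QI2_continuous (X := X)).
Proof.
by rewrite GSI2_openE; split; exact: GSI2_conv_SI2P.
Qed.
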